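(* Let $F$ be an isotropic random field on $\mathcal S^N$ that is almost surely continuous, and let $\mathbf n=(\sqrt N,0,\dots,0)$. Suppose: (1) for every $c>0$ there is $c_1(c)>0$ such that for every $\delta>0$, $\mathbb P(|F(\mathbf n)-\mathbb E F(\mathbf n)|\ge cN^{1/2+\delta})\lesssim e^{-c_1N^{1+2\delta}}$; (2) there is $\alpha>0$ and for every $c>0$ a $c_2(c)>0$ such that for every $\delta>0$, $\mathbb P(\sup_{x,y:R(x,y)\ge1-N^{-\alpha}}|F(x)-F(y)|\ge cN^{1/2+\delta})\lesssim e^{-c_2N^{1+2\delta}}$. Then for every $c>0$ there is $f(c)>0$ (depending on $c_1,c_2$) such that for every $\delta>0$, $\mathbb P(\sup_{x\in\mathcal S^N}|F(x)-\mathbb E F(\mathbf n)|\ge cN^{1/2+\delta})\lesssim e^{-f(c)N^{1+2\delta}}$. Moreover, if $F\ge0$ almost surely, $\mathbb EF(\mathbf n)=O(\sqrt N)$, (1) holds, and (2) is replaced by (2'): there is $\alpha>0$ and for every $c>0$ a $c_2(c)>0$ such that for every $\delta>0$, $\mathbb P(\sup_{x,y:R(x,y)\ge1-N^{-\alpha}}|F^2(x)-F^2(y)|\ge cN^{1+2\delta})\lesssim e^{-c_2N^{1+2\delta}}$, then for every $c>0$ there is $f(c)>0$ such that for every $\delta>0$, $\mathbb P(\sup_{x\in\mathcal S^N}F(x)\ge cN^{1/2+\delta})\lesssim e^{-f(c)N^{1+2\delta}}$.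
   Context: $\mathcal S^N=\{x\in\mathbb R^N:\sum x_i^2=N\}$; $R(x,y)=\frac1N\sum_ix_iy_i$ is the normalized overlap. A random field on $\mathcal S^N$ is isotropic if its law is invariant under orthogonal transformations of $\mathbb R^N$. The symbol $\lesssim$ means inequality up to a constant independent of $N$. *)

From HB Require Import structures.
From mathcomp Require Import all_boot all_order all_algebra.
From mathcomp Require Import all_classical all_reals all_analysis.
Set Implicit Arguments. Unset Strict Implicit. Unset Printing Implicit Defensive.
Import Order.TTheory GRing.Theory Num.Theory.
Import numFieldNormedType.Exports.
Local Open Scope classical_set_scope.
Local Open Scope ring_scope.

Section Defs.
Variable R : realType.

Definition sphere (N : nat) : set 'rV[R]_N :=
  [set x | \sum_(i < N) (x ord0 i) ^+ 2 = N%:R].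

Arguments sphere : clear implicits.
Definition overlap (N : nat) (x y : 'rV[R]_N) : R :=
  (\sum_(i < N) x ord0 i * y ord0 i) / N%:R.

Definition npole (N : nat) : 'rV[R]_N :=
  \row_(i < N) (if val i == 0%N then Num.sqrt (N%:R) else 0).

Arguments npole : clear implicits.
Definition orthogonal_mx (N : nat) (O : 'M[R]_N) : Prop :=
  O *m O^T = 1%:M.

Variables (d : measure_display) (T : measurableType d) (P : probability T R).

Definition outerP (A : set T) : \bar R :=
  ereal_inf [set P B | B in [set B | measurable B /\ A `<=` B]].

Definition random_field (N : nat) (F : 'rV[R]_N -> T -> R) : Prop :=
  forall x, sphere N x -> measurable_fun setT (F x).

(* isotropy: every finite-dimensional distribution of the field is invariant
   under every orthogonal transformation (checked on products of Borel sets,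
   which determine the joint law) *)
Definition isotropic (N : nat) (F : 'rV[R]_N -> T -> R) : Prop :=
  forall (O : 'M[R]_N), orthogonal_mx O ->
  forall (k : nat) (xs : 'I_k -> 'rV[R]_N) (Bs : 'I_k -> set R),
    (forall i, sphere N (xs i)) -> (forall i, measurable (Bs i)) ->
    P [set w | forall i, Bs i (F (xs i *m O) w)] =
    P [set w | forall i, Bs i (F (xs i) w)].

Definition as_continuous (N : nat) (F : 'rV[R]_N -> T -> R) : Prop :=
  {ae P, forall w, {within sphere N, continuous (fun x => F x w)}}.

Definition mean_pole (N : nat) (F : 'rV[R]_N -> T -> R) : R :=
  fine (\int[P]_w (F (npole N) w)%:E).

Definition sup_sphere (N : nat) (g : 'rV[R]_N -> T -> R) (w : T) : \bar R :=
  ereal_sup [set (g x w)%:E | x in sphere N].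

Definition sup_close (N : nat) (alpha : R) (g : 'rV[R]_N -> T -> R) (w : T)
  : \bar R :=
  ereal_sup [set (`|g xy.1 w - g xy.2 w|)%:E | xy in
     [set xy | sphere N xy.1 /\ sphere N xy.2 /\
               1 - (N%:R `^ (- alpha)) <= overlap xy.1 xy.2]].
End Defs.
Arguments sphere {R} N _.
Arguments npole {R} N.

(* The sphere has a net of at most (7 N^B)^N points such that every point of the
   sphere has overlap at least 1 - N^(-alpha) with some net point.  By isotropy,
   |F(y) - E F(n)| has the same law at every net point y as at the north pole,
   so a union bound over the net costs only a factor exp(O(N log N)), which is
   negligible against exp(-c N^(1+2 delta)); hypothesis (2) then controls F
   between a point and its nearest net point. *)

From HB Require Import structures.
From mathcomp Require Import all_boot all_order all_algebra.
From mathcomp Require Import all_classical all_reals all_analysis.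
From mathcomp Require Import ring lra zify.
Set Implicit Arguments. Unset Strict Implicit. Unset Printing Implicit Defensive.
Import Order.TTheory GRing.Theory Num.Theory.
Import numFieldNormedType.Exports.
Local Open Scope classical_set_scope.
Local Open Scope ring_scope.

Section OuterProbability.
Variables (R : realType) (d : measure_display) (T : measurableType d).
Variable P : probability T R.

Lemma outerP_ge0 A : (0 <= outerP P A)%E.
Proof. by apply: le_ereal_inf_tmp => _ [B _ <-]. Qed.

Lemma outerP_le1 A : (outerP P A <= 1)%E.
Proof.
apply: ereal_inf_lbound; exists setT; last exact: probability_setT.
by split.
Qed.

Lemma outerP_fin_num A : outerP P A \is a fin_num.
Proof.
by rewrite ge0_fin_numE ?outerP_ge0 // (le_lt_trans (outerP_le1 _)) ?ltry.
Qed.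

Lemma measure_le_outerP A : measurable A -> (P A <= outerP P A)%E.
Proof.
move=> mA; apply: le_ereal_inf_tmp => _ [B [mB AB] <-].
by apply: le_measure => //; rewrite inE.
Qed.

Lemma outerP_le_measureU A U B : measurable U -> A `<=` U `|` B ->
  (outerP P A <= P U + outerP P B)%E.
Proof.
move=> mU AUB; rewrite addeC -lee_subel_addr ?outerP_fin_num //.
apply: le_ereal_inf_tmp => _ [B' [mB' BB'] <-].
rewrite lee_subel_addr ?fin_num_measure //.
apply: (@le_trans _ _ (P (U `|` B'))); last by rewrite addeC measureU2.
apply: ereal_inf_lbound; exists (U `|` B') => //; split; first exact: measurableU.
by move=> x /AUB [?|/BB' ?]; [left|right].
Qed.

Lemma measure_bigsetU_seq_le (I : eqType) (s : seq I) (A : I -> set T) (b : R) :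
  (forall i, i \in s -> measurable (A i) /\ (P (A i) <= b%:E)%E) ->
  measurable (\big[setU/set0]_(i <- s) A i) /\
  (P (\big[setU/set0]_(i <- s) A i) <= ((size s)%:R * b)%:E)%E.
Proof.
elim: s => [|i s IHs] sA; first by rewrite big_nil measure0 mul0r.
have [ms Ps] := IHs (fun j js => sA j (predU1r _ _ js)).
have [mi Pi] := sA i (mem_head _ _).
rewrite big_cons; split; first exact: measurableU.
apply: le_trans (measureU2 _ mi ms) _.
by rewrite /= -addn1 natrD mulrDl mul1r addrC EFinD leeD.
Qed.

Lemma outerP_cover_le (I : eqType) (s : seq I) (A : I -> set T) (B E : set T)
    (b : R) :
  (forall i, i \in s -> measurable (A i) /\ (P (A i) <= b%:E)%E) ->
  (forall w, E w -> B w \/ exists2 i, i \in s & A i w) ->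
  (outerP P E <= ((size s)%:R * b)%:E + outerP P B)%E.
Proof.
move=> sA EBA; have [mU PU] := measure_bigsetU_seq_le sA.
apply: le_trans (outerP_le_measureU mU _) (leeD PU (lexx _)).
move=> w /EBA [Bw|[i si Aiw]]; [right|left] => //.
elim: s si {sA mU PU EBA} => // j s IHs; rewrite in_cons big_cons.
by case/orP=> [/eqP <-|/IHs]; [left|right].
Qed.

Definition exp_bounded (A : nat -> set T) (f g : R) : Prop :=
  exists C : R, forall N : nat, (0 < N)%N ->
    (outerP P (A N) <= (C * expR (- f * N%:R `^ g))%:E)%E.

Definition exp_tail (A : R -> R -> nat -> set T) : Prop :=
  forall c : R, 0 < c -> exists f : R, 0 < f /\
    forall delta : R, 0 < delta -> exp_bounded (A c delta) f (1 + 2 * delta).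

Lemma exp_bounded_eventually (A : nat -> set T) (f g C0 : R) (N0 : nat) :
  0 <= f -> 0 <= g ->
  (forall N, (N0 <= N)%N -> (0 < N)%N ->
     (outerP P (A N) <= (C0 * expR (- f * N%:R `^ g))%:E)%E) ->
  exp_bounded A f g.
Proof.
move=> f0 g0 AC0; exists (Num.max C0 (expR (f * N0%:R `^ g))) => N Npos.
have [N0N|NN0] := leqP N0 N.
  apply: (le_trans (AC0 N N0N Npos)); rewrite lee_fin ler_wpM2r ?expR_ge0 //.
  by rewrite le_max lexx.
apply: (le_trans (outerP_le1 _)); rewrite lee_fin.
apply: (@le_trans _ _ (expR (f * N0%:R `^ g) * expR (- f * N%:R `^ g))); last first.
  by rewrite ler_wpM2r ?expR_ge0 // le_max lexx orbT.
rewrite -expRD; apply: le_trans (expR_ge1Dx _).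
rewrite lerDl mulNr subr_ge0 ler_wpM2l //.
by apply: ge0_ler_powR => //; rewrite ?nnegrE ?ler0n // ler_nat ltnW.
Qed.

End OuterProbability.

Section Asymptotics.
Variable R : realType.

Lemma powR_speed_sqr (N : nat) (dl : R) :
  N%:R `^ (1 + 2 * dl) = (N%:R `^ (2^-1 + dl)) ^+ 2.
Proof.
have -> : 1 + 2 * dl = (2^-1 + dl) * 2%:R by field.
by rewrite powRrM powR_mulrn // powR_ge0.
Qed.

Lemma powR_half_add (N : nat) (dl : R) : (0 < N)%N ->
  N%:R `^ (2^-1 + dl) = Num.sqrt N%:R * N%:R `^ dl.
Proof.
move=> N0; rewrite powRD; last by apply/implyP => _; rewrite pnatr_eq0 -lt0n.
by rewrite powR12_sqrt ?ler0n.
Qed.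

Lemma powR_nat_ge_eventually (dl U : R) : 0 < dl ->
  exists N0 : nat, forall N : nat, (N0 <= N)%N -> U <= N%:R `^ dl.
Proof.
move=> dl0; set V := Num.max U 0.
have V0 : 0 <= V by rewrite le_max lexx orbT.
have W0 : 0 <= V `^ dl^-1 by apply: powR_ge0.
exists (Num.Def.archi_bound (V `^ dl^-1)) => N N0N.
have WN : V `^ dl^-1 <= N%:R.
  by apply: le_trans (ltW (archi_boundP W0)) _; rewrite ler_nat.
apply: (@le_trans _ _ V); first by rewrite le_max lexx.
have -> : V = (V `^ dl^-1) `^ dl by rewrite -powRrM mulVf ?gt_eqF // powRr1.
by apply: ge0_ler_powR => //; rewrite ?ltW // nnegrE (le_trans W0 WN).
Qed.

(* A net of [(K N^B)^N] points costs [exp(O(N log N))], which is eventually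
   absorbed by any [exp(c N^(1+2 dl))]. *)
Lemma poly_pow_le_expR_eventually (c dl : R) (K B : nat) :
  0 < c -> 0 < dl -> (0 < K)%N ->
  exists N0 : nat, forall N : nat, (N0 <= N)%N -> (0 < N)%N ->
  forall L : nat, (L <= K * N ^ B)%N ->
  L%:R ^+ N <= expR (c * N%:R `^ (1 + 2 * dl)).
Proof.
move=> c0 dl0 K0.
set U := (ln K%:R + B%:R / dl) / c.
have [N0 HN0] := powR_nat_ge_eventually (Num.max 1 U) dl0.
exists N0 => N N0N Npos L LKN.
have := HN0 N N0N; rewrite ge_max => /andP[u1 uU]; set u := N%:R `^ dl in u1 uU.
have Nr0 : (0 : R) < N%:R by rewrite ltr0n.
have speedE : N%:R `^ (1 + 2 * dl) = N%:R * u ^+ 2.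
  rewrite powRD; last by apply/implyP => _; rewrite gt_eqF.
  rewrite powRr1 ?ler0n //; congr (_ * _).
  by rewrite mulrC powRrM powR_mulrn // (le_trans ler01 u1).
rewrite speedE mulrA [c * _]mulrC -mulrA expRM_natl.
have [->|L0] := posnP L; first by rewrite expr0n gtn_eqF //= exprn_ge0 ?expR_ge0.
apply: lerXn2r; rewrite ?nnegrE ?ler0n ?expR_ge0 //.
have KN0 : (0 : R) < K%:R * N%:R ^+ B by rewrite mulr_gt0 ?exprn_gt0 ?ltr0n.
apply: (@le_trans _ _ (K%:R * N%:R ^+ B)); first by rewrite -natrX -natrM ler_nat.
rewrite -(lnK (x := K%:R * N%:R ^+ B)) ?posrE // ler_expR.
rewrite lnM ?posrE ?exprn_gt0 ?ltr0n // lnXn //.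
have lnN : ln (N%:R : R) <= u / dl.
  by rewrite ler_pdivlMr // mulrC -ln_powR ltW // ln_sublinear // powR_gt0.
apply: (@le_trans _ _ (c * U * u)).
  have -> : c * U = ln K%:R + B%:R / dl by rewrite /U mulrC divfK ?gt_eqF.
  rewrite mulrDl lerD //; first by rewrite ler_peMr ?ln_ge0 ?ler1n.
  by rewrite mulrAC -mulrA -[_ *+ B]mulr_natl ler_wpM2l ?ler0n.
by rewrite -mulrA ler_pM2l // expr2 ler_pM2r // (lt_le_trans ltr01 u1).
Qed.

Lemma net_sum_le_expR (L N : nat) (C1 C2 c1 c2 e : R) :
  0 < c1 -> 0 < c2 -> 0 <= e -> L%:R ^+ N <= expR (c1 / 2 * e) ->
  L%:R ^+ N * (C1 * expR (- c1 * e)) + C2 * expR (- c2 * e) <=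
  (`|C1| + `|C2|) * expR (- (Num.min c1 c2 / 2) * e).
Proof.
move=> c10 c20 e0 LN; rewrite mulrDl.
have expR_le c : Num.min c1 c2 / 2 <= c ->
    expR (- c * e) <= expR (- (Num.min c1 c2 / 2) * e).
  by move=> mc; rewrite ler_expR !mulNr lerN2 ler_wpM2r.
apply: lerD; last first.
  apply: le_trans (ler_wpM2r (expR_ge0 _) (ler_norm C2)) _.
  rewrite ler_wpM2l ?expR_le // ler_pdivrMr // ge_min; apply/orP; right; lra.
rewrite mulrCA; apply: le_trans (ler_wpM2r _ (ler_norm C1)) _.
  by rewrite mulr_ge0 ?exprn_ge0 ?ler0n ?expR_ge0.
rewrite ler_wpM2l //; apply: le_trans (ler_wpM2r (expR_ge0 _) LN) _.
rewrite -expRD -mulrDl; have -> : c1 / 2 + - c1 = - (c1 / 2) by field.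
by rewrite expR_le // ler_pM2r // ge_min lexx.
Qed.

End Asymptotics.

Section SphereGeometry.
Variable R : realType.
Implicit Type N : nat.

Definition dot N (u v : 'rV[R]_N) : R := \sum_(i < N) u ord0 i * v ord0 i.

Lemma dotC N (u v : 'rV[R]_N) : dot u v = dot v u.
Proof. by apply: eq_bigr => i _; rewrite mulrC. Qed.

Lemma dotBl N (u v w : 'rV[R]_N) : dot (u - v) w = dot u w - dot v w.
Proof. by rewrite /dot -sumrB; apply: eq_bigr => i _; rewrite !mxE mulrBl. Qed.

Lemma dotBr N (u v w : 'rV[R]_N) : dot w (u - v) = dot w u - dot w v.
Proof. by rewrite dotC dotBl !(dotC w). Qed.

Lemma dotZl N a (u w : 'rV[R]_N) : dot (a *: u) w = a * dot u w.
Proof. by rewrite /dot mulr_sumr; apply: eq_bigr => i _; rewrite !mxE mulrA. Qed.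

Lemma dotZr N a (u w : 'rV[R]_N) : dot w (a *: u) = a * dot w u.
Proof. by rewrite dotC dotZl dotC. Qed.

Lemma dot_ge0 N (u : 'rV[R]_N) : 0 <= dot u u.
Proof. by apply: sumr_ge0 => i _; rewrite -expr2 sqr_ge0. Qed.

Lemma dot_eq0 N (u : 'rV[R]_N) : dot u u = 0 -> u = 0.
Proof.
move=> /psumr_eq0P u0; apply/rowP => j; rewrite mxE.
have /eqP := u0 (fun i _ => ltac:(by rewrite -expr2 sqr_ge0)) j isT.
by rewrite -expr2 sqrf_eq0 => /eqP.
Qed.

Lemma mul_row_tr N (u v : 'rV[R]_N) : u *m v^T = (dot u v)%:M.
Proof.
rewrite [LHS]mx11_scalar; congr (_%:M).
by rewrite !mxE; apply: eq_bigr => i _; rewrite !mxE.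
Qed.

Lemma sphereE N (x : 'rV[R]_N) : sphere N x <-> dot x x = N%:R.
Proof.
rewrite /sphere /dot /=.
by rewrite (eq_bigr (fun i => x ord0 i * x ord0 i)) // => i _; rewrite expr2.
Qed.

Lemma npole_sphere N : (0 < N)%N -> sphere N (npole N : 'rV[R]_N).
Proof.
case: N => // N _; rewrite /sphere /= big_ord_recl /= !mxE /=.
rewrite sqr_sqrtr ?ler0n // big1 ?addr0 // => i _.
by rewrite !mxE /= expr0n.
Qed.

Definition reflection N (v : 'rV[R]_N) : 'M[R]_N :=
  1%:M - (2 / dot v v) *: (v^T *m v).

Lemma reflection_orthogonal N (v : 'rV[R]_N) : dot v v != 0 ->
  orthogonal_mx (reflection v).
Proof.
move=> v0; set Q := v^T *m v.
have QT : Q^T = Q by rewrite /Q trmx_mul trmxK.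
have QQ : Q *m Q = dot v v *: Q.
  by rewrite /Q mulmxA -(mulmxA v^T) mul_row_tr mul_mx_scalar -scalemxAl.
rewrite /orthogonal_mx.
have -> : (reflection v)^T = reflection v.
  by rewrite /reflection linearB /= trmx1 linearZ /= -/Q QT.
rewrite /reflection -/Q.
rewrite mulmxBl !mulmxBr mulmx1 !mul1mx -!scalemxAl -!scalemxAr QQ !scalerA.
have -> : 2 / dot v v * (2 / dot v v) * dot v v = 2 * (2 / dot v v) by field.
by rewrite mulmx1; apply/matrixP => i j; rewrite !mxE; ring.
Qed.

Lemma mul_reflection N (u v : 'rV[R]_N) :
  u *m reflection v = u - (2 / dot v v * dot u v) *: v.
Proof.
by rewrite mulmxBr mulmx1 -scalemxAr mulmxA mul_row_tr mul_scalar_mx scalerA.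
Qed.

(* The reflection through the bisecting hyperplane maps the north pole to [y]. *)
Lemma npole_orthogonal_orbit N (y : 'rV[R]_N) : (0 < N)%N -> sphere N y ->
  exists2 O : 'M[R]_N, orthogonal_mx O & npole N *m O = y.
Proof.
move=> N0 /sphereE yy; have /sphereE nn := npole_sphere N0.
set n := npole N in nn *; set v := n - y.
have vv : dot v v = 2 * dot n v.
  by rewrite /v !dotBl !dotBr nn yy (dotC y n); ring.
have [v0|v0] := eqVneq (dot v v) 0.
  exists 1%:M; first by rewrite /orthogonal_mx trmx1 mulmx1.
  by rewrite mulmx1; apply/eqP; rewrite -subr_eq0 -/v (dot_eq0 v0).
exists (reflection v); first exact: reflection_orthogonal.
have nv0 : dot n v != 0 by move: v0; rewrite vv mulf_eq0 negb_or => /andP[].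
rewrite mul_reflection vv.
have -> : 2 / (2 * dot n v) * dot n v = 1 by field.
by rewrite scale1r /v opprB addrC subrK.
Qed.

End SphereGeometry.

Section SphereNet.
Variable R : realType.

Lemma grid_point (N m : nat) (x : R) : (0 < m)%N -> `|x| <= N%:R ->
  exists j : 'I_(2 * (m * N)).+1,
    0 <= x - ((j : nat)%:R - (m * N)%:R) / m%:R <= m%:R^-1.
Proof.
move=> m0 xN; have mr0 : (0 : R) < m%:R by rewrite ltr0n.
have [xlo xhi] : - N%:R <= x /\ x <= N%:R by move: xN; rewrite ler_norml => /andP.
set w := m%:R * x + (m * N)%:R.
have w0 : 0 <= w by rewrite /w natrM; nra.
have w2 : w <= (2 * (m * N))%:R by rewrite /w !natrM; nra.
have [t1 t2] := andP (truncn_itv w0); rewrite -natr1 in t2.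
have jlt : (Num.truncn w < (2 * (m * N)).+1)%N.
  by rewrite ltnS truncn_le_nat (le_lt_trans w2) // ltr_nat.
exists (Ordinal jlt) => /=.
have -> : x - ((Num.truncn w)%:R - (m * N)%:R) / m%:R =
    (w - (Num.truncn w)%:R) / m%:R by rewrite /w; field; rewrite gt_eqF.
rewrite divr_ge0 ?subr_ge0 ?ler0n //= ler_pdivrMr // mulVf ?gt_eqF //.
by rewrite lerBlDl ltW.
Qed.

Lemma sphere_coord_le (N : nat) (x : 'rV[R]_N) i : sphere N x ->
  `|x ord0 i| <= N%:R.
Proof.
move=> /sphereE xx.
have xi : x ord0 i ^+ 2 <= N%:R.
  rewrite -xx /dot (bigD1 i) //= expr2 lerDl sumr_ge0 // => j _.
  by rewrite -expr2 sqr_ge0.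
have N1 : (1 : R) <= N%:R by rewrite ler1n (leq_trans _ (ltn_ord i)).
by rewrite ler_norml; apply/andP; split; nra.
Qed.

(* With [n = |x|], [t = |z|], [p = <x, z>]: a relative error
   [|x - z|^2 <= e |x|^2] costs at most a factor [1 - e] on the cosine. *)
Lemma inner_lower_bound (n t p e : R) : 0 < n -> 0 < t -> 0 <= e -> e <= 4^-1 ->
  n ^+ 2 - 2 * p + t ^+ 2 <= n ^+ 2 * e -> (1 - e) * (n * t) <= p.
Proof.
move=> n0 t0 e0 e4 dist_le.
suff : 0 <= (n - t) ^+ 2 + e * n * (2 * t - n) by nra.
have [n2t|tn2] := lerP n (2 * t).
  by rewrite addr_ge0 ?sqr_ge0 // !mulr_ge0 ?subr_ge0 // ltW.
have n_le : n ^+ 2 <= 4 * (n - t) ^+ 2.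
  have : n ^+ 2 <= (2 * (n - t)) ^+ 2 by rewrite lerXn2r ?nnegrE //; lra.
  by rewrite exprMn; lra.
have : e * (n - 2 * t) <= 4^-1 * n.
  apply: (@le_trans _ _ (4^-1 * (n - 2 * t))); first by rewrite ler_wpM2r //; lra.
  by rewrite ler_wpM2l //; lra.
have : e * n * (n - 2 * t) <= 4^-1 * n ^+ 2 by nra.
have -> : e * n * (2 * t - n) = - (e * n * (n - 2 * t)) by ring.
lra.
Qed.

Definition sphere_proj (N : nat) (z : 'rV[R]_N) : 'rV[R]_N :=
  if 0 < dot z z then (Num.sqrt N%:R / Num.sqrt (dot z z)) *: z else npole N.

Lemma sphere_proj_sphere (N : nat) (z : 'rV[R]_N) : (0 < N)%N ->
  sphere N (sphere_proj z).
Proof.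
rewrite /sphere_proj; case: ifP => z0 N0; last exact: npole_sphere.
apply/sphereE; rewrite dotZl dotZr mulrA -expr2 expr_div_n.
by rewrite !sqr_sqrtr ?ler0n ?ltW // divfK ?gt_eqF.
Qed.

Lemma overlap_sphere_proj (N : nat) (x z : 'rV[R]_N) (e : R) :
  (0 < N)%N -> sphere N x -> 0 <= e -> e <= 4^-1 ->
  dot (x - z) (x - z) <= N%:R * e -> 1 - e <= overlap x (sphere_proj z).
Proof.
move=> N0 /sphereE xx e0 e4 dist_le; have Nr0 : (0 : R) < N%:R by rewrite ltr0n.
have distE : dot (x - z) (x - z) = N%:R - 2 * dot x z + dot z z.
  by rewrite dotBl !dotBr xx (dotC z x); ring.
have z0 : 0 < dot z z.
  rewrite lt_def dot_ge0 andbT; apply/negP => /eqP /dot_eq0 z0.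
  by move: dist_le; rewrite z0 subr0 xx; nra.
rewrite /sphere_proj z0 /overlap -/(dot _ _) dotZr.
set n := Num.sqrt (N%:R : R); set t := Num.sqrt (dot z z).
have n0 : 0 < n by rewrite sqrtr_gt0.
have t0 : 0 < t by rewrite sqrtr_gt0.
have nN : N%:R = n ^+ 2 by rewrite sqr_sqrtr ?ler0n.
have tz : dot z z = t ^+ 2 by rewrite sqr_sqrtr // ltW.
have := @inner_lower_bound n t (dot x z) e n0 t0 e0 e4.
rewrite -nN -tz -distE => /(_ dist_le) cos_ge.
rewrite nN ler_pdivlMr ?exprn_gt0 // mulrAC ler_pdivlMr //.
have -> : (1 - e) * n ^+ 2 * t = n * ((1 - e) * (n * t)) by ring.
by rewrite ler_pM2l.
Qed.

Definition grid_row (N m : nat) (g : {ffun 'I_N -> 'I_(2 * (m * N)).+1}) :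
  'rV[R]_N := \row_i (((g i : nat)%:R - (m * N)%:R) / m%:R).

Lemma grid_row_approx (N m : nat) (x : 'rV[R]_N) : (0 < m)%N -> sphere N x ->
  exists g : {ffun 'I_N -> 'I_(2 * (m * N)).+1},
    dot (x - grid_row g) (x - grid_row g) <= N%:R * m%:R^-1 ^+ 2.
Proof.
move=> m0 xs.
pose near i (j : 'I_(2 * (m * N)).+1) :=
  0 <= x ord0 i - ((j : nat)%:R - (m * N)%:R) / m%:R <= m%:R^-1.
pose g := [ffun i => odflt ord0 [pick j | near i j]].
have nearg i : near i (g i).
  rewrite ffunE; case: pickP => [j //|none].
  have [j nij] := grid_point m0 (sphere_coord_le i xs).
  by have := none j; rewrite /near nij.
exists g; apply: (@le_trans _ _ (\sum_(i < N) m%:R^-1 ^+ 2)); last first.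
  by rewrite sumr_const card_ord mulr_natl.
apply: ler_sum => i _; rewrite !mxE -expr2.
have /andP[d0 d1] := nearg i.
by rewrite lerXn2r // nnegrE ?invr_ge0 ?ler0n.
Qed.

(* Rounding every coordinate down to the grid of mesh [1/m], [m = 2 N^A],
   and projecting back to the sphere loses at most [1/m^2 <= N^(-al)] in
   overlap. *)
Lemma sphere_net (al : R) : 0 < al -> exists B : nat, forall N : nat, (0 < N)%N ->
  exists (s : seq 'rV[R]_N) (L : nat), [/\ (L <= 7 * N ^ B)%N, size s = (L ^ N)%N,
  (forall y, y \in s -> sphere N y) &
  (forall x, sphere N x -> exists2 y, y \in s & 1 - N%:R `^ (- al) <= overlap x y)].
Proof.
move=> al0; set A := Num.Def.archi_bound al.
have alA : al < A%:R by apply: archi_boundP; apply: ltW.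
exists A.+1 => N N0; set m := (2 * N ^ A)%N.
have m0 : (0 < m)%N by rewrite muln_gt0 expn_gt0 N0.
exists (map (fun g => sphere_proj (grid_row g)) (enum {ffun 'I_N -> 'I_(2 * (m * N)).+1})).
exists (2 * (m * N)).+1; split.
- rewrite /m expnS -mulnA [(N * N ^ A)%N]mulnC.
  have : (0 < N ^ A * N)%N by rewrite muln_gt0 expn_gt0 N0.
  by move: (N ^ A * N)%N => X; lia.
- by rewrite size_map -cardE card_ffun !card_ord.
- by move=> _ /mapP[g _ ->]; apply: sphere_proj_sphere.
move=> x xs; have [g gx] := grid_row_approx m0 xs.
exists (sphere_proj (grid_row g)); first by apply: map_f; rewrite mem_enum.
have mr : (2 : R) <= m%:R by rewrite /m natrM ler_peMr ?ler0n // ler1n expn_gt0 N0.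
have e4 : m%:R^-1 ^+ 2 <= 4^-1 :> R.
  by rewrite exprVn lef_pV2 ?posrE ?exprn_gt0 ?ltr0n //; nra.
have eN : m%:R^-1 ^+ 2 <= N%:R `^ (- al).
  rewrite powRN exprVn lef_pV2 ?posrE ?exprn_gt0 ?powR_gt0 ?ltr0n //.
  apply: (@le_trans _ _ (N%:R `^ A%:R)).
    by apply: ler_powR; [rewrite ler1n | exact: ltW].
  rewrite powR_mulrn ?ler0n // /m natrM natrX expr2.
  rewrite -[X in X <= _]mul1r mulrA ler_wpM2r ?exprn_ge0 ?ler0n //.
  have : (1 : R) <= N%:R ^+ A by rewrite exprn_ege1 // ler1n.
  nra.
by apply: le_trans (overlap_sphere_proj _ _ _ e4 gx); rewrite ?lerB.
Qed.

End SphereNet.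

Section IsotropicTail.
Variables (R : realType) (d : measure_display) (T : measurableType d).
Variable P : probability T R.

Lemma measurable_dist_ge (t m : R) : measurable [set r : R | t <= `|r - m|].
Proof.
have -> : [set r : R | t <= `|r - m|] = `]-oo, (m - t)] `|` `[(m + t), +oo[.
  apply/seteqP; split => r /=; rewrite !in_itv /= ?andbT ler_normr.
    by case/orP => ?; [right|left]; lra.
  by case=> ?; apply/orP; [right|left]; lra.
by apply: measurableU; apply: measurable_itv.
Qed.

Lemma measurable_tail (N : nat) (F : 'rV[R]_N -> T -> R) (t m : R) (y : 'rV[R]_N) :
  random_field F -> sphere N y -> measurable [set w | t <= `|F y w - m|].
Proof.
move=> Ffield ys.
by have := Ffield y ys measurableT _ (measurable_dist_ge t m); rewrite setTI.
Qed.

Lemma isotropic_tail_npole (N : nat) (F : 'rV[R]_N -> T -> R) (t m : R)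
    (y : 'rV[R]_N) :
  (0 < N)%N -> isotropic P F -> sphere N y ->
  P [set w | t <= `|F y w - m|] = P [set w | t <= `|F (npole N) w - m|].
Proof.
move=> N0 Fiso ys; have [Om Om_orth nOm] := npole_orthogonal_orbit N0 ys.
have single z : [set w | forall i : 'I_1, t <= `|F z w - m|] =
    [set w | t <= `|F z w - m|].
  by apply/seteqP; split => w /=; [apply; exact: ord0 | move=> ? _].
rewrite -!single -nOm.
apply: (Fiso Om Om_orth 1%N (fun _ => npole N) (fun _ => [set r | t <= `|r - m|])).
- by move=> _; apply: npole_sphere.
- by move=> _; apply: measurable_dist_ge.
Qed.

End IsotropicTail.

Section Suprema.
Variables (R : realType) (d : measure_display) (T : measurableType d).

Lemma sup_sphere_gt (N : nat) (g : 'rV[R]_N -> T -> R) (w : T) (a b : R) :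
  b < a -> (a%:E <= sup_sphere g w)%E -> exists2 x, sphere N x & b < g x w.
Proof.
move=> ba aS; have : (b%:E < sup_sphere g w)%E by rewrite (lt_le_trans _ aS).
by case/ereal_sup_gt => _ [x xs <-]; rewrite lte_fin; exists x.
Qed.

Lemma le_sup_close (N : nat) (al : R) (g : 'rV[R]_N -> T -> R) (w : T)
    (x y : 'rV[R]_N) :
  sphere N x -> sphere N y -> 1 - N%:R `^ (- al) <= overlap x y ->
  ((`|g x w - g y w|)%:E <= sup_close al g w)%E.
Proof. by move=> xs ys xy; apply: ereal_sup_ubound; exists (x, y). Qed.

End Suprema.

Section NetArgument.
Variables (R : realType) (d : measure_display) (T : measurableType d).
Variable P : probability T R.
Variable F : forall N : nat, 'rV[R]_N -> T -> R.
Arguments F : clear implicits.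
Hypothesis F_field : forall N, (0 < N)%N -> random_field (F N).
Hypothesis F_iso : forall N, (0 < N)%N -> isotropic P (F N).

Lemma net_tail (al dl c1 c2 : R) (t m : nat -> R) (E B : nat -> set T) (N1 : nat) :
  0 < al -> 0 < dl -> 0 < c1 -> 0 < c2 ->
  exp_bounded P (fun N => [set w | t N <= `|F N (npole N) w - m N|]) c1 (1 + 2 * dl) ->
  exp_bounded P B c2 (1 + 2 * dl) ->
  (forall N, (N1 <= N)%N -> (0 < N)%N -> forall w, E N w ->
     exists2 x, sphere N x & forall y, sphere N y ->
       1 - N%:R `^ (- al) <= overlap x y -> B N w \/ t N <= `|F N y w - m N|) ->
  exp_bounded P E (Num.min c1 c2 / 2) (1 + 2 * dl).
Proof.
move=> al0 dl0 c10 c20 [C1 poleC1] [C2 BC2] cover.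
have [k net] := sphere_net al0.
have c1h : 0 < c1 / 2 by rewrite divr_gt0.
have [N0 net_size] := poly_pow_le_expR_eventually k c1h dl0 (isT : (0 < 7)%N).
apply: (@exp_bounded_eventually _ _ _ P E _ _ (`|C1| + `|C2|) (maxn N0 N1)).
- by rewrite divr_ge0 // le_min !ltW.
- by rewrite addr_ge0 // mulr_ge0 // ltW.
move=> N; rewrite geq_max => /andP[N0N N1N] Npos.
have [s [L [LK sL s_sph s_net]]] := net N Npos.
pose A y := [set w | t N <= `|F N y w - m N|].
have A_le y : y \in s -> measurable (A y) /\
    (P (A y) <= (C1 * expR (- c1 * N%:R `^ (1 + 2 * dl)))%:E)%E.
  move=> ys; split; first exact: measurable_tail (F_field Npos) (s_sph y ys).
  rewrite /A (isotropic_tail_npole _ _ Npos (F_iso Npos) (s_sph y ys)).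
  apply: le_trans (poleC1 N Npos).
  exact/measure_le_outerP/measurable_tail/npole_sphere/Npos/F_field.
apply: le_trans (outerP_cover_le (B := B N) A_le _) _.
  move=> w /(cover N N1N Npos) [x xs xnet]; have [y ys xy] := s_net x xs.
  by case: (xnet y (s_sph y ys) xy) => ?; [left | right; exists y].
apply: le_trans (leeD (lexx _) (BC2 N Npos)) _.
rewrite sL natrX -EFinD lee_fin; apply: net_sum_le_expR => //.
exact: net_size.
Qed.


Lemma sup_centered_tail :
  exp_tail P (fun c delta N => [set w | c * N%:R `^ (2^-1 + delta) <=
                                        `|F N (npole N) w - mean_pole P (F N)|]) ->
  (exists al : R, 0 < al /\
     exp_tail P (fun c delta N => [set w | ((c * N%:R `^ (2^-1 + delta))%:E <=
                                            sup_close al (F N) w)%E])) ->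
  exp_tail P (fun c delta N => [set w | ((c * N%:R `^ (2^-1 + delta))%:E <=
      sup_sphere (fun x w => `|F N x w - mean_pole P (F N)|%R) w)%E]).
Proof.
move=> pole_tail [al [al0 close_tail]] c c0.
have [c1 [c10 hc1]] := pole_tail (c / 4) ltac:(by rewrite divr_gt0).
have [c2 [c20 hc2]] := close_tail (c / 2) ltac:(by rewrite divr_gt0).
exists (Num.min c1 c2 / 2); split; first by rewrite divr_gt0 // lt_min c10 c20.
move=> dl dl0; apply: (net_tail (N1 := 0) (t := fun N => c / 4 * N%:R `^ (2^-1 + dl))
  (m := fun N => mean_pole P (F N)) al0 dl0 c10 c20 (hc1 dl dl0) (hc2 dl dl0)).
move=> N _ Npos w /=; set be := N%:R `^ (2^-1 + dl); set m := mean_pole P (F N).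
have be0 : 0 < be by rewrite powR_gt0 // ltr0n.
case/(sup_sphere_gt (b := 3 * c / 4 * be)); first by rewrite ltr_pM2r //; lra.
move=> x xs Fx; exists x => // y ys xy.
have [Fxy|Fxy] := lerP (c / 2 * be) `|F N x w - F N y w|; [left|right].
  by rewrite (le_trans _ (le_sup_close _ _ xs ys xy)) ?lee_fin.
have := ler_normD (F N x w - F N y w) (F N y w - m).
by rewrite addrA subrK; lra.
Qed.

Lemma sqr_gap (u v s : R) : 0 < s -> 3 / 4 * s < u -> `|v| < s / 2 ->
  5 / 16 * s ^+ 2 <= `|u ^+ 2 - v ^+ 2|.
Proof.
move=> s0 su vs; apply: le_trans (ler_norm _).
have : v ^+ 2 < (s / 2) ^+ 2.
  by rewrite -real_normK ?num_real // ltrXn2r ?nnegrE ?normr_ge0 // ltW.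
have : (3 / 4 * s) ^+ 2 <= u ^+ 2 by rewrite lerXn2r ?nnegrE //; lra.
by rewrite !exprMn; lra.
Qed.

(* Here [E F(n) = O(sqrt N)] lets the centring be absorbed, and a large value
   [F(x)] next to a moderate value [F(y)] is a large increment of [F^2]. *)
Lemma sup_tail_of_mean_sqrt :
  (exists K : R, forall N, (0 < N)%N ->
     `|mean_pole P (F N)| <= K * Num.sqrt (N%:R)) ->
  exp_tail P (fun c delta N => [set w | c * N%:R `^ (2^-1 + delta) <=
                                        `|F N (npole N) w - mean_pole P (F N)|]) ->
  (exists al : R, 0 < al /\
     exp_tail P (fun c delta N => [set w | ((c * N%:R `^ (1 + 2 * delta))%:E <=
                              sup_close al (fun x w => (F N x w ^+ 2)%R) w)%E])) ->
  exp_tail P (fun c delta N => [set w | ((c * N%:R `^ (2^-1 + delta))%:E <=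
                                         sup_sphere (F N) w)%E]).
Proof.
move=> [K meanK] pole_tail [al [al0 close_tail]] c c0.
have [c1 [c10 hc1]] := pole_tail (c / 4) ltac:(by rewrite divr_gt0).
have [c2 [c20 hc2]] := close_tail (5 / 16 * c ^+ 2)
  ltac:(by rewrite mulr_gt0 // exprn_gt0).
exists (Num.min c1 c2 / 2); split; first by rewrite divr_gt0 // lt_min c10 c20.
move=> dl dl0; have [N1 N1K] := powR_nat_ge_eventually (4 * K / c) dl0.
apply: (net_tail (N1 := N1) (t := fun N => c / 4 * N%:R `^ (2^-1 + dl))
  (m := fun N => mean_pole P (F N)) al0 dl0 c10 c20 (hc1 dl dl0) (hc2 dl dl0)).
move=> N N1N Npos w /=; set be := N%:R `^ (2^-1 + dl); set m := mean_pole P (F N).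
have be0 : 0 < be by rewrite powR_gt0 // ltr0n.
have m_le : `|m| <= c / 4 * be.
  apply: le_trans (meanK N Npos) _; rewrite /be powR_half_add //.
  have := N1K N N1N; rewrite ler_pdivrMr // => KN.
  have sqrtN0 : 0 <= Num.sqrt (N%:R : R) by apply: sqrtr_ge0.
  by nra.
case/(sup_sphere_gt (b := 3 * c / 4 * be)); first by rewrite ltr_pM2r //; lra.
move=> x xs Fx; exists x => // y ys xy.
have [Fy|Fy] := lerP (c / 4 * be) `|F N y w - m|; [by right|left].
apply: le_trans _ (le_sup_close _ _ xs ys xy); rewrite lee_fin powR_speed_sqr -/be.
have -> : 5 / 16 * c ^+ 2 * be ^+ 2 = 5 / 16 * (c * be) ^+ 2 by ring.
apply: sqr_gap; [exact: mulr_gt0 | lra |].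
have := ler_normD (F N y w - m) m; rewrite subrK; lra.
Qed.

End NetArgument.

Theorem mainTheorem12 (R : realType) (d : measure_display) (T : measurableType d)
  (P : probability T R) (F : forall N : nat, 'rV[R]_N -> T -> R) :
  (forall N, (0 < N)%N -> random_field (F N)) ->
  (forall N, (0 < N)%N -> isotropic P (F N)) ->
  (forall N, (0 < N)%N -> as_continuous P (F N)) ->
  (forall N, (0 < N)%N -> P.-integrable setT (fun w => (F N (npole N) w)%:E)) ->
  (* hypothesis (1) *)
  let H1 := forall c : R, 0 < c -> exists c1 : R, 0 < c1 /\
      forall delta : R, 0 < delta -> exists C : R, forall N : nat, (0 < N)%N ->
        (outerP P [set w | (c * N%:R `^ (2^-1 + delta) <=
                            `|F N (npole N) w - mean_pole P (F N)|)%R] <=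
         (C * expR (- c1 * N%:R `^ (1 + 2 * delta)))%:E)%E in
  (* hypothesis (2) *)
  let H2 := exists alpha : R, 0 < alpha /\ forall c : R, 0 < c ->
      exists c2 : R, 0 < c2 /\
      forall delta : R, 0 < delta -> exists C : R, forall N : nat, (0 < N)%N ->
        (outerP P [set w | ((c * N%:R `^ (2^-1 + delta))%:E <=
                            sup_close alpha (F N) w)%E] <=
         (C * expR (- c2 * N%:R `^ (1 + 2 * delta)))%:E)%E in
  (* hypothesis (2') *)
  let H2' := exists alpha : R, 0 < alpha /\ forall c : R, 0 < c ->
      exists c2 : R, 0 < c2 /\
      forall delta : R, 0 < delta -> exists C : R, forall N : nat, (0 < N)%N ->
        (outerP P [set w | ((c * N%:R `^ (1 + 2 * delta))%:E <=
                            sup_close alpha (fun x w => (F N x w ^+ 2)%R) w)%E] <=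
         (C * expR (- c2 * N%:R `^ (1 + 2 * delta)))%:E)%E in
  (H1 -> H2 ->
    forall c : R, 0 < c -> exists f : R, 0 < f /\
      forall delta : R, 0 < delta -> exists C : R, forall N : nat, (0 < N)%N ->
        (outerP P [set w | ((c * N%:R `^ (2^-1 + delta))%:E <=
            sup_sphere (fun x w => `|F N x w - mean_pole P (F N)|%R) w)%E] <=
         (C * expR (- f * N%:R `^ (1 + 2 * delta)))%:E)%E)
  /\
  ((forall N, (0 < N)%N ->
      {ae P, forall w, forall x, sphere N x -> 0 <= F N x w}) ->
   (exists K : R, forall N, (0 < N)%N ->
      `|mean_pole P (F N)| <= K * Num.sqrt (N%:R)) ->
   H1 -> H2' ->
    forall c : R, 0 < c -> exists f : R, 0 < f /\
      forall delta : R, 0 < delta -> exists C : R, forall N : nat, (0 < N)%N ->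
        (outerP P [set w | ((c * N%:R `^ (2^-1 + delta))%:E <=
            sup_sphere (F N) w)%E] <=
         (C * expR (- f * N%:R `^ (1 + 2 * delta)))%:E)%E).
Proof.
move=> F_field F_iso _ _ H1 H2 H2'; split.
- exact: sup_centered_tail.
- by move=> _; apply: sup_tail_of_mean_sqrt.
Qed.
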